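(* Let $\ell\ge 1$ be an integer. In the game $\mathrm{CN}(2\ell+1,\ell+1)$, every position in $$S_1=\Big\{(x,\underbrace{0,\ldots,0}_{\ell-1},x,a_1,\ldots,a_\ell)\ \Big|\ x,a_1,\dots,a_\ell\ge 0 \text{ integers},\ \sum_{i=1}^{\ell}a_i=x\Big\}$$ (up to rotation and reflection) is a $\mathcal P$-position.
   Context: Circular Nim $\mathrm{CN}(n,k)$: $n$ stacks of tokens are arranged in a circle; a position is a vector $(p_1,\dots,p_n)$ of nonnegative integers giving the stack heights in order around the circle, determined only up to rotation and reflection. A move consists of choosing $k$ cyclically consecutive stacks and removing at least one token from at least one of these $k$ stacks (any number from each chosen stack; other stacks unchanged). Under normal play the last player able to move wins. A $\mathcal P$-position is one from which the player about to move loses under optimal play. *)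

From mathcomp Require Import all_boot.
Set Implicit Arguments. Unset Strict Implicit. Unset Printing Implicit Defensive.

(* Circular Nim CN(n,k). A position is a sequence p of n stack heights,
   p`_0, ..., p`_(n-1), listed in order around the circle. *)

Definition in_window (n k i j : nat) : bool := (j + n - i) %% n < k.

Definition cn_move (n k : nat) (p q : seq nat) : Prop :=
  [/\ size p = n, size q = n, q <> p &
    exists2 i, i < n &
      forall j, j < n ->
        nth 0 q j <= nth 0 p j /\
        (~~ in_window n k i j -> nth 0 q j = nth 0 p j)].

(* P-positions (previous player wins) and N-positions under normal play,
   defined inductively; since every move decreases the token total the
   game is finite and this is the standard characterization. *)
Inductive cn_P (n k : nat) : seq nat -> Prop :=
  | cnP_intro p : (forall q, cn_move n k p q -> cn_N n k q) -> cn_P n k p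
with cn_N (n k : nat) : seq nat -> Prop :=
  | cnN_intro p q : cn_move n k p q -> cn_P n k q -> cn_N n k p.

Definition S1_rep (l x : nat) (a : seq nat) : seq nat :=
  x :: nseq l.-1 0 ++ x :: a.

From mathcomp Require Import all_boot zify.

Set Implicit Arguments.
Unset Strict Implicit.
Unset Printing Implicit Defensive.

(* Write positions as (u, 0, ..., 0, v, b) with stack l holding v.
   A window of l+1 consecutive stacks out of 2l+1 misses stack 0, or stack l,
   or all of the stacks l+1, ..., 2l, so a move from (x, 0.., x, a) with
   sum a = x keeps u = x, v = x or b = a.  The reply lowers the position to
   (m, 0.., m, b') with m = min(u, v, sum b) and sum b' = m, using the window
   that omits a component already at value m; as m < x, induction on x shows
   these positions are P-positions.  Rotations and reflections map moves to
   moves, hence P-positions to P-positions. *)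

Lemma in_windowE n k i j : i < n -> j < n ->
  in_window n k i j = (if i <= j then j - i < k else j + n - i < k).
Proof.
move=> lt_in lt_jn; rewrite /in_window; case: (leqP i j) => le_ij.
  by rewrite -addnBAC // modnDr modn_small //; lia.
by rewrite modn_small //; lia.
Qed.

Lemma cn_move_relabel n k (s : seq nat -> seq nat) (f g : nat -> nat) p q :
    (forall t, size t = n -> size (s t) = n) -> injective s ->
    (forall t j, size t = n -> j < n -> nth 0 (s t) j = nth 0 t (f j)) ->
    (forall j, j < n -> f j < n) ->
    (forall i j, i < n -> j < n ->
       g i < n /\ in_window n k (g i) j = in_window n k i (f j)) ->
  cn_move n k p q -> cn_move n k (s p) (s q).
Proof.
move=> size_s inj_s nth_s lt_f win_g [size_p size_q neq_qp [i lt_in mv]].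
split; [exact: size_s | exact: size_s | by move/inj_s | exists (g i)].
  by have [] := win_g i i lt_in lt_in.
move=> j lt_jn; rewrite !nth_s //; have [_ ->] := win_g i j lt_in lt_jn.
exact: mv (lt_f j lt_jn).
Qed.

Lemma nth_rot_small (T : Type) (x0 : T) r (s : seq T) j :
    r <= size s -> j < size s ->
  nth x0 (rot r s) j =
    nth x0 s (if j + r < size s then j + r else j + r - size s).
Proof.
move=> le_r lt_j; rewrite /rot nth_cat size_drop nth_drop.
case: ifP => [lt_jr | ge_jr]; first by rewrite ifT addnC //; lia.
rewrite ifF ?nth_take; try lia; congr nth; lia.
Qed.

Lemma cn_move_rot n k r p q :
  cn_move n k p q -> cn_move n k (rot r p) (rot r q).
Proof.
move=> mv; have [size_p size_q _ _] := mv.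
have [le_rn | lt_nr] := leqP r n; last by rewrite !rot_oversize ?size_p ?size_q 1?ltnW.
apply: (@cn_move_relabel n k (rot r) (fun j => if j + r < n then j + r else j + r - n)
          (fun i => if r <= i then i - r else i + n - r) p q _ _ _ _ _ mv).
- by move=> t; rewrite size_rot.
- exact: rot_inj.
- by move=> t j size_t lt_jn; rewrite nth_rot_small size_t.
- by move=> j lt_jn; case: ifP; lia.
- move=> i j lt_in lt_jn; split; first by case: ifP; lia.
  by rewrite !in_windowE; repeat case: ifP; lia.
Qed.

Lemma cn_move_rev n k p q : 0 < k <= n ->
  cn_move n k p q -> cn_move n k (rev p) (rev q).
Proof.
move=> k_gt0_le_n mv.
apply: (@cn_move_relabel n k rev (fun j => n - j.+1)
          (fun i => if i + k <= n then n - i - k else 2 * n - i - k) p q _ _ _ _ _ mv).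
- by move=> t; rewrite size_rev.
- exact: (can_inj revK).
- by move=> t j size_t lt_jn; rewrite nth_rev size_t.
- by move=> j; lia.
- move=> i j lt_in lt_jn; split; first by case: ifP; lia.
  by rewrite !in_windowE; repeat case: ifP; lia.
Qed.

Scheme cn_P_mut_ind := Induction for cn_P Sort Prop
with cn_N_mut_ind := Induction for cn_N Sort Prop.

Lemma cn_P_transport n k (s t : seq nat -> seq nat) :
    (forall p q, cn_move n k p q -> cn_move n k (s p) (s q)) ->
    (forall p q, cn_move n k p q -> cn_move n k (t p) (t q)) ->
    cancel s t -> cancel t s ->
  forall p, cn_P n k p -> cn_P n k (s p).
Proof.
move=> mv_s mv_t sK tK p.
apply: (@cn_P_mut_ind n k (fun p _ => cn_P n k (s p)) (fun p _ => cn_N n k (s p))).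
- move=> {}p _ IH; constructor => q /mv_t; rewrite sK => /IH; by rewrite tK.
- by move=> {}p q mv _ IH; apply: cnN_intro (mv_s _ _ mv) IH.
Qed.

Lemma cn_P_rot n k r p : cn_P n k p -> cn_P n k (rot r p).
Proof.
apply: (@cn_P_transport n k (rot r) (rotr r)); [exact: cn_move_rot | | exact: rotK | exact: rotrK].
move=> {}p q mv; have [size_p size_q _ _] := mv.
by rewrite /rotr size_p size_q; apply: cn_move_rot.
Qed.

Lemma cn_P_rev n k p : 0 < k <= n -> cn_P n k p -> cn_P n k (rev p).
Proof.
move=> k_gt0_le_n.
by apply: (@cn_P_transport n k rev rev _ _ revK revK) => {}p q; apply: cn_move_rev.
Qed.

Lemma leqif_sumn (s t : seq nat) : size s = size t ->
  (forall j, nth 0 s j <= nth 0 t j) -> sumn s <= sumn t ?= iff (s == t).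
Proof.
elim: s t => [|x s IH] [|y t] //= [size_st] le_st.
rewrite eqseq_cons.
exact: leqif_add (leqif_eq (le_st 0)) (IH t size_st (fun j => le_st j.+1)).
Qed.

Lemma exists_lower_sumn (t : seq nat) m : m <= sumn t ->
  exists s, [/\ size s = size t, sumn s = m & forall j, nth 0 s j <= nth 0 t j].
Proof.
elim: t m => [|y t IH] m /=; first by rewrite leqn0 => /eqP ->; exists [::].
move=> le_m; have [s [size_s sum_s le_st]] := IH (minn m (sumn t)) (geq_minr _ _).
exists ((m - minn m (sumn t)) :: s); split=> [||[|j]] //=; [by rewrite size_s | lia | lia].
Qed.

Definition S1_pos (l u v : nat) (b : seq nat) : seq nat :=
  u :: nseq l.-1 0 ++ v :: b.

Section S1Positions.

Variable l : nat.
Hypothesis l_gt0 : 0 < l.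

Local Notation n := (2 * l + 1).
Local Notation k := (l + 1).
Local Notation pos := (S1_pos l).

Lemma size_S1_pos u v b : size (pos u v b) = l.+1 + size b.
Proof. by rewrite /= size_cat size_nseq /=; lia. Qed.

Lemma nth_S1_pos u v b j :
  nth 0 (pos u v b) j =
    if j == 0 then u else if j < l then 0 else if j == l then v else nth 0 b (j - l.+1).
Proof.
case: j => [|j] //=; rewrite nth_cat size_nseq nth_nseq.
case: ltnP => [lt_jl | le_lj]; first by rewrite ifT //; lia.
rewrite ifF; last lia.
case: eqP => [<- | ne_jl]; first by rewrite subnn.
by have -> : j - l.-1 = (j - l).+1 by lia.
Qed.

Lemma nth_S1_pos_l u v b : nth 0 (pos u v b) l = v.
Proof. by rewrite nth_S1_pos ltnn eqxx /=; case: eqP => //; lia. Qed.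

Lemma nth_S1_pos_tail u v b j : nth 0 (pos u v b) (l.+1 + j) = nth 0 b j.
Proof. by rewrite nth_S1_pos addKn ifF ?ifF ?ifF //; lia. Qed.

Lemma S1_pos_inj u v b u' v' b' :
  pos u v b = pos u' v' b' -> [/\ u = u', v = v' & b = b'].
Proof.
case=> -> /(congr1 (drop l.-1)); rewrite !drop_size_cat ?size_nseq //.
by case=> -> ->.
Qed.

Lemma S1_posE q : size q = n -> (forall j, 0 < j < l -> nth 0 q j = 0) ->
  q = pos (nth 0 q 0) (nth 0 q l) (drop l.+1 q).
Proof.
move=> size_q zero_q; apply: (@eq_from_nth _ 0).
  by rewrite size_S1_pos size_drop size_q; lia.
move=> j; rewrite size_q => lt_jn; rewrite nth_S1_pos nth_drop.
case: eqP => [-> // | ne_j0]; case: ifP => [lt_jl | ge_jl]; first by apply: zero_q; lia.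
by case: eqP => [-> // | ne_jl]; congr nth; lia.
Qed.

Lemma in_window_first j : j < n -> in_window n k 0 j = (j <= l).
Proof. by move=> lt_jn; rewrite /in_window subn0 modnDr modn_small // addn1 ltnS. Qed.

Lemma in_window_middle j : j < n -> in_window n k l j = (l <= j).
Proof. by move=> lt_jn; rewrite in_windowE //; [case: ifP | ]; lia. Qed.

Lemma in_window_last j : j < n -> in_window n k l.+1 j = (j == 0) || (l < j).
Proof. by move=> lt_jn; rewrite in_windowE //; [case: ifP | ]; lia. Qed.

Lemma window_avoids_S1 i : i < n ->
  [\/ i = 0, ~~ in_window n k i 0 | ~~ in_window n k i l].
Proof.
move=> lt_in; case: (posnP i) => [| i_gt0]; first by constructor 1.
case: (leqP i l) => le_il; [constructor 2 | constructor 3];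
  by rewrite in_windowE //; [case: ifP | ]; lia.
Qed.

Lemma cn_move_from_S1 u v b q : size b = l -> cn_move n k (pos u v b) q ->
  exists u' v' b', q = pos u' v' b' /\ size b' = l.
Proof.
move=> size_b [_ size_q _ [i _ mv]]; exists (nth 0 q 0), (nth 0 q l), (drop l.+1 q).
split; last by rewrite size_drop size_q; lia.
apply: S1_posE => // j /andP[j_gt0 lt_jl].
have lt_jn : j < n by lia.
have [+ _] := mv j lt_jn.
by rewrite nth_S1_pos ifF ?ifT //; lia.
Qed.

Lemma cn_move_S1 u v b u' v' b' : size b = l -> size b' = l ->
  cn_move n k (pos u v b) (pos u' v' b') <->
  [/\ pos u' v' b' <> pos u v b, u' <= u, v' <= v,
      forall j, nth 0 b' j <= nth 0 b j & [\/ u' = u, v' = v | b' = b]].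
Proof.
move=> size_b size_b'; split.
  case=> _ _ neq [i lt_in mv]; have le_qp := fun j lt_jn => (mv j lt_jn).1.
  have eq_out := fun j lt_jn => (mv j lt_jn).2.
  split=> //.
  - by have := le_qp 0; apply; lia.
  - by have := le_qp l; rewrite !nth_S1_pos_l; apply; lia.
  - move=> j; have [lt_jl | le_lj] := ltnP j l; last by rewrite !nth_default ?size_b ?size_b'.
    by have := le_qp (l.+1 + j); rewrite !nth_S1_pos_tail; apply; lia.
  case: (window_avoids_S1 lt_in) => [i0 | out0 | outl].
  - constructor 3; apply: (@eq_from_nth _ 0) => [| j]; first by rewrite size_b size_b'.
    rewrite size_b' => lt_jl; have := eq_out (l.+1 + j).
    by rewrite !nth_S1_pos_tail i0 in_window_first; [apply | ..]; lia.
  - by constructor 1; have := eq_out 0; apply=> //; lia.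
  - by constructor 2; have := eq_out l; rewrite !nth_S1_pos_l; apply=> //; lia.
case=> neq le_u le_v le_b fixed.
split=> //; try by rewrite size_S1_pos ?size_b ?size_b'; lia.
have le_qp j : nth 0 (pos u' v' b') j <= nth 0 (pos u v b) j.
  by rewrite !nth_S1_pos; case: (j == 0) => //; case: (j < l) => //; case: (j == l).
move: le_qp; case: fixed => [-> | -> | ->] le_qp; [exists l | exists l.+1 | exists 0];
  try lia; move=> j lt_jn; (split; first exact: le_qp).
- rewrite in_window_middle // -ltnNge => lt_jl.
  by rewrite !nth_S1_pos lt_jl; case: (j == 0).
- rewrite in_window_last // negb_or -leqNgt => /andP[/negPf j_neq0].
  rewrite !nth_S1_pos j_neq0 leq_eqVlt => /orP[/eqP -> | -> //].
  by rewrite ltnn eqxx.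
- rewrite in_window_first // -ltnNge => lt_lj.
  have j_gt0 : 0 < j := leq_ltn_trans (leq0n l) lt_lj.
  by rewrite !nth_S1_pos (gtn_eqF j_gt0) (leq_gtF (ltnW lt_lj)) (gtn_eqF lt_lj).
Qed.

Lemma cn_P_S1_pos x a : size a = l -> sumn a = x -> cn_P n k (pos x x a).
Proof.
elim/ltn_ind: x a => x IH a size_a sum_a; constructor=> q mv.
have [u [v [b [def_q size_b]]]] := cn_move_from_S1 size_a mv; subst q.
have [neq le_u le_v le_b fixed] := (cn_move_S1 _ _ _ _ size_a size_b).1 mv.
have sum_b := leqif_sumn (etrans size_b (esym size_a)) le_b; rewrite sum_a in sum_b.
set m := minn u (minn v (sumn b)).
have le_m_sb : m <= sumn b by rewrite /m; lia.
have [b' [size_b' sum_b' le_b']] := exists_lower_sumn le_m_sb.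
rewrite size_b in size_b'.
have lt_mx : m < x.
  rewrite ltn_neqAle (leq_trans (geq_minl _ _) le_u) andbT.
  apply: contra_notN neq => /eqP m_eq_x; have le_sb_x := sum_b.1.
  have [-> -> sum_bx] : [/\ u = x, v = x & sumn b = x] by rewrite /m in m_eq_x; split; lia.
  by have /eqP -> : b == a by rewrite -sum_b sum_bx.
apply: cnN_intro (IH m lt_mx b' size_b' sum_b').
apply/cn_move_S1 => //; split=> //; try lia.
  case/S1_pos_inj=> m_u m_v eq_b'b; case: fixed => [||eq_ba]; try lia.
  by move: sum_b'; rewrite eq_b'b eq_ba sum_a; lia.
have [m_u | m_v | m_sb] : [\/ m = u, m = v | m = sumn b].
  rewrite /m /minn; case: ifP => _; last case: ifP => _.
  - by constructor 1.
  - by constructor 2.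
  - by constructor 3.
- by constructor 1.
- by constructor 2.
constructor 3; apply/eqP.
by rewrite -(leqif_sumn (etrans size_b' (esym size_b)) le_b') sum_b' m_sb.
Qed.

End S1Positions.

Theorem lemma5 (l x : nat) (a : seq nat) (r : nat) (refl : bool) :
  1 <= l -> size a = l -> sumn a = x ->
  cn_P (2 * l + 1) (l + 1)
    (rot r (if refl then rev (S1_rep l x a) else S1_rep l x a)).
Proof.
move=> l_gt0 size_a sum_a; apply: cn_P_rot.
have P_S1 : cn_P (2 * l + 1) (l + 1) (S1_rep l x a) := cn_P_S1_pos l_gt0 size_a sum_a.
by case: refl => //; apply: cn_P_rev P_S1; lia.
Qed.
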